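(* Let $0<\alpha<1$ and $x_A>0$. For a point $(x,y)$ with $x>0$ and $(x,y)\neq(x_A,0)$, consider the Apollonius circle of the Target position $T=(x,y)$ and the Attacker position $A=(x_A,0)$ with ratio $\alpha$, i.e. the circle with center abscissa $x_O=\frac{x-\alpha^2x_A}{1-\alpha^2}$ and radius $r=\frac{\alpha}{1-\alpha^2}\sqrt{(x_A-x)^2+y^2}$. Let $R_e$ be the set of such points $(x,y)$, $x>0$, for which this circle crosses the $y$-axis, i.e. $x_O<r$ (equivalently $x-\alpha^2x_A<\alpha\sqrt{(x_A-x)^2+y^2}$), and let $R_{e_o}$ be the set of remaining points with $x>0$. Then $$R_e=\Big\{(x,y):\ x>0,\ \frac{x^2}{\alpha^2x_A^2}-\frac{y^2}{(1-\alpha^2)x_A^2}<1\Big\},$$ so that the curve separating $R_e$ from $R_{e_o}$ is the right branch ($x>0$) of the hyperbola $$\frac{x^2}{\alpha^2x_A^2}-\frac{y^2}{(1-\alpha^2)x_A^2}=1.$$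
   Context: Setting (reduced state space of the active target defense game): the Attacker starts at $(x_A,0)$ and the Defender at $(-x_A,0)$, $x_A>0$, both with the same constant speed $V_A=V_D$; the Target starts at $(x,y)$ with $x>0$ and has constant speed $V_T$; $\alpha=V_T/V_A\in(0,1)$. The Apollonius circle of $T$ and $A$ with ratio $\alpha$ is the set of points $P$ with $|PT|=\alpha|PA|$. $R_e$ is the escape region: initial Target positions from which the Target can reach the $y$-axis (where the Defender can intercept the Attacker) before the Attacker reaches it, characterized by the Apollonius circle crossing the $y$-axis. *)

From mathcomp Require Import all_boot all_order all_algebra.
From mathcomp Require Import reals.
Set Implicit Arguments. Unset Strict Implicit. Unset Printing Implicit Defensive.
Import Order.TTheory GRing.Theory Num.Theory.
Local Open Scope ring_scope.

Definition apollo_xO {R : realType} (alpha xA x : R) : R :=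
  (x - alpha ^+ 2 * xA) / (1 - alpha ^+ 2).

Definition apollo_r {R : realType} (alpha xA x y : R) : R :=
  alpha / (1 - alpha ^+ 2) * Num.sqrt ((xA - x) ^+ 2 + y ^+ 2).

Definition escape_region {R : realType} (alpha xA : R) (p : R * R) : Prop :=
  0 < p.1 /\ p <> (xA, 0) /\ apollo_xO alpha xA p.1 < apollo_r alpha xA p.1 p.2.

Definition Reo {R : realType} (alpha xA : R) (p : R * R) : Prop :=
  0 < p.1 /\ ~ escape_region alpha xA p.

Definition hyp_region {R : realType} (alpha xA : R) (p : R * R) : Prop :=
  0 < p.1 /\
  p.1 ^+ 2 / (alpha ^+ 2 * xA ^+ 2) - p.2 ^+ 2 / ((1 - alpha ^+ 2) * xA ^+ 2) < 1.

From mathcomp Require Import all_boot all_order all_algebra.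
From mathcomp Require Import reals.
From mathcomp Require Import ring lra.
Import Order.TTheory GRing.Theory Num.Theory.
Local Open Scope ring_scope.

(** With [d := x - alpha^2 xA] and [s := |TA|], the Apollonius circle crosses
   the y-axis iff [d < alpha s].  The identity
   [(alpha s)^2 - d^2 = alpha^2 (1 - alpha^2) xA^2 - ((1 - alpha^2) x^2 - alpha^2 y^2)]
   turns the hyperbola inequality into [d^2 < (alpha s)^2], i.e. [|d| < alpha s].
   For [x > 0] the lower bound [-d < alpha s] always holds, since
   [alpha s >= alpha (xA - x) > alpha^2 xA - x]; so the two conditions agree. *)

Lemma ltr_sqr_of_oppr_lt (R : realDomainType) (d t : R) :
  - d < t -> (d < t) = (d ^+ 2 < t ^+ 2).
Proof.
move=> ltNdt; apply/idP/idP; rewrite expr2 [t ^+ 2]expr2 => h; nra.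
Qed.

Section Apollonius.

Variables (R : realType) (alpha xA : R).
Hypotheses (alpha_gt0 : 0 < alpha) (alpha_lt1 : alpha < 1) (xA_gt0 : 0 < xA).

Let dist_TA (x y : R) : R := Num.sqrt ((xA - x) ^+ 2 + y ^+ 2).

Let one_sub_sqr_gt0 : 0 < 1 - alpha ^+ 2.
Proof. by rewrite subr_gt0 exprn_ilt1 // ltW. Qed.

Lemma sqr_dist_TA (x y : R) : dist_TA x y ^+ 2 = (xA - x) ^+ 2 + y ^+ 2.
Proof. by rewrite sqr_sqrtr // addr_ge0 ?sqr_ge0. Qed.

Lemma apollo_xO_lt_r (x y : R) :
  (apollo_xO alpha xA x < apollo_r alpha xA x y)
    = (x - alpha ^+ 2 * xA < alpha * dist_TA x y).
Proof.
by rewrite /apollo_xO /apollo_r [alpha / _ * _]mulrAC ltr_pM2r ?invr_gt0.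
Qed.

Lemma hyperbola_gap (x y : R) :
  (alpha * dist_TA x y) ^+ 2 - (x - alpha ^+ 2 * xA) ^+ 2
    = alpha ^+ 2 * (1 - alpha ^+ 2) * xA ^+ 2
      - ((1 - alpha ^+ 2) * x ^+ 2 - alpha ^+ 2 * y ^+ 2).
Proof. by rewrite exprMn sqr_dist_TA; ring. Qed.

Lemma hyperbola_lt1 (x y : R) :
  (x ^+ 2 / (alpha ^+ 2 * xA ^+ 2) - y ^+ 2 / ((1 - alpha ^+ 2) * xA ^+ 2) < 1)
    = ((x - alpha ^+ 2 * xA) ^+ 2 < (alpha * dist_TA x y) ^+ 2).
Proof.
have den_gt0 : 0 < alpha ^+ 2 * (1 - alpha ^+ 2) * xA ^+ 2.
  by rewrite !mulr_gt0 // exprn_gt0.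
rewrite -[RHS]subr_gt0 hyperbola_gap subr_gt0.
rewrite -[X in _ = (_ < X)]mul1r -ltr_pdivrMr //; congr (_ < 1).
by field; rewrite ?mulf_neq0 ?expf_neq0 ?gt_eqF.
Qed.

Lemma oppr_offset_lt_dist (x y : R) :
  0 < x -> - (x - alpha ^+ 2 * xA) < alpha * dist_TA x y.
Proof.
move=> x_gt0.
have dist_ge : xA - x <= dist_TA x y.
  rewrite (le_trans (ler_norm _)) // -sqrtr_sqr ler_wsqrtr //.
  by rewrite lerDl sqr_ge0.
have : alpha * (xA - x) <= alpha * dist_TA x y by rewrite ler_pM2l.
have : 0 < (1 - alpha) * (alpha * xA + x).
  by rewrite mulr_gt0 ?subr_gt0 ?addr_gt0 ?mulr_gt0.
rewrite expr2; lra.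
Qed.

Lemma offset_lt_dist_neq_A (x y : R) :
  x - alpha ^+ 2 * xA < alpha * dist_TA x y -> (x, y) <> (xA, 0).
Proof.
move=> + [ex ey]; rewrite ex ey.
rewrite /dist_TA subrr expr0n /= addr0 sqrtr0 mulr0.
by rewrite -[X in X - _]mul1r -mulrBl pmulr_rlt0 // ltNge ltW.
Qed.

End Apollonius.

Theorem proposition4 (R : realType) (alpha xA : R) :
  0 < alpha -> alpha < 1 -> 0 < xA ->
  forall p : R * R, escape_region alpha xA p <-> hyp_region alpha xA p.
Proof.
move=> alpha_gt0 alpha_lt1 xA_gt0 [x y].
rewrite /escape_region /hyp_region /= apollo_xO_lt_r // hyperbola_lt1 //.
split=> [[x_gt0 [_ lt_off]] | [x_gt0 lt_sqr]].
- by split=> //; rewrite -ltr_sqr_of_oppr_lt // oppr_offset_lt_dist.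
- move: lt_sqr; rewrite -ltr_sqr_of_oppr_lt ?oppr_offset_lt_dist // => lt_off.
  by do 2!split=> //; exact: offset_lt_dist_neq_A lt_off.
Qed.
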